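(* Let $G$ be a vertex-color-avoiding connected graph and let $v$ be a cut-vertex of $G$ (a vertex whose removal disconnects $G$). Then all but one of the connected components of $G-v$ consist only of vertices having the same color as $v$.
   Context: Vertex-colorings are arbitrary (not necessarily proper). Two vertices $u,w$ are vertex-$c$-avoiding connected (for a color $c$) if there is a $u$-$w$ path and either at least one of $u,w$ has color $c$ or some $u$-$w$ path contains no vertex of color $c$. A graph is vertex-color-avoiding connected if any two vertices are vertex-$c$-avoiding connected for every color $c$. *)

From mathcomp Require Import all_boot.
Set Implicit Arguments. Unset Strict Implicit. Unset Printing Implicit Defensive.

Definition simple_graph (T : finType) (e : rel T) : Prop :=
  symmetric e /\ irreflexive e.

Definition avoid_rel (T : finType) (C : eqType) (e : rel T) (col : T -> C) (k : C) : rel T :=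
  [rel x y | [&& e x y, col x != k & col y != k]].

Definition vc_avoiding_connected (T : finType) (C : eqType) (e : rel T)
    (col : T -> C) (k : C) (u w : T) : Prop :=
  connect e u w /\
  (col u = k \/ col w = k \/ connect (avoid_rel e col k) u w).

Definition vertex_color_avoiding_connected (T : finType) (C : eqType)
    (e : rel T) (col : T -> C) : Prop :=
  forall (k : C) (u w : T), vc_avoiding_connected e col k u w.

Definition del_rel (T : finType) (e : rel T) (v : T) : rel T :=
  [rel x y | [&& e x y, x != v & y != v]].

Definition cut_vertex (T : finType) (e : rel T) (v : T) : Prop :=
  exists x y, [/\ x != v, y != v & ~~ connect (del_rel e v) x y].

From mathcomp Require Import all_boot.

(* Two vertices not coloured like v are joined by a path avoiding the colour
   of v, hence avoiding v itself; so all such vertices lie in a single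
   component of G - v, and any of them (or any vertex at all, if there is
   none) can serve as x0. *)

Section ColorAvoidingPaths.

Variables (T : finType) (C : eqType) (e : rel T) (col : T -> C).

Lemma connect_avoid_rel (k : C) (u w : T) :
  vertex_color_avoiding_connected e col -> col u != k -> col w != k ->
  connect (avoid_rel e col k) u w.
Proof.
move=> vca uk wk; have [_ [/eqP|[/eqP|//]]] := vca k u w.
- by rewrite (negbTE uk).
- by rewrite (negbTE wk).
Qed.

Lemma avoid_rel_sub_del_rel (v : T) : subrel (avoid_rel e col (col v)) (del_rel e v).
Proof.
move=> x y /and3P [exy xk yk]; apply/and3P; split=> //.
- by apply: contraNneq xk => ->.
- by apply: contraNneq yk => ->.
Qed.

Lemma connect_avoid_del_rel (v x y : T) :
  connect (avoid_rel e col (col v)) x y -> connect (del_rel e v) x y.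
Proof. by apply: connect_sub => a b /avoid_rel_sub_del_rel/connect1. Qed.

End ColorAvoidingPaths.

Theorem lemma3p12 (T : finType) (C : eqType) (e : rel T) (col : T -> C) (v : T) :
  simple_graph e ->
  vertex_color_avoiding_connected e col ->
  cut_vertex e v ->
  exists x0 : T, x0 != v /\
    forall y : T, y != v -> ~~ connect (del_rel e v) x0 y -> col y = col v.
Proof.
move=> _ vca [x [_ [xv _ _]]].
case: (pickP [pred z | (z != v) && (col z != col v)]) => [x0 /andP [x0v x0k] | all_k].
- exists x0; split=> // y yv; apply: contraNeq => yk.
  exact/connect_avoid_del_rel/connect_avoid_rel.
- exists x; split=> // y yv _; apply/eqP.
  by move: (all_k y); rewrite /= yv => /negbFE.
Qed.
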